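(* Let $n>1$ and let $\Omega_S$ be the set of all real $2\times 2n$ matrices of the form $A=\begin{bmatrix} w & 0\\ 0 & -w\end{bmatrix}$, $w\in\mathbb{R}^n$. Let $L(A)$ be the span of the rows of $A$, $L(\Omega_S)=\bigcup_{A\in\Omega_S}L(A)\subset\mathbb{R}^{2n}$, let $\mathcal{P}_{\Omega_S}$ be the set of all real polynomials in $2n$ variables vanishing identically on $L(\Omega_S)$, and let $\mathcal{N}_S=\bigcap_{p\in\mathcal{P}_{\Omega_S}}\{z\in\mathbb{R}^{2n}:p(z)=0\}$. Then \[ L(\Omega_S)=\overline{L(\Omega_S)}=\mathcal{N}_S, \] where the bar denotes closure in $\mathbb{R}^{2n}$. *)

From HB Require Import structures.
From mathcomp Require Import all_boot all_order all_algebra.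
From mathcomp Require Import all_classical all_reals all_analysis.
From mathcomp Require mpoly.
Set Implicit Arguments. Unset Strict Implicit. Unset Printing Implicit Defensive.
Import Order.TTheory GRing.Theory Num.Theory.
Import numFieldNormedType.Exports.
Local Open Scope ring_scope.
Local Open Scope classical_set_scope.

Definition OmegaS_mx (R : nzRingType) (n : nat) (w : 'rV[R]_n) : 'M[R]_(1 + 1, n + n) :=
  block_mx w 0 0 (- w).

Definition OmegaS (R : nzRingType) (n : nat) : set 'M[R]_(1 + 1, n + n) :=
  [set A | exists w : 'rV[R]_n, A = OmegaS_mx w].

Definition Lrow (R : fieldType) (m k : nat) (A : 'M[R]_(m, k)) : set 'rV[R]_k :=
  [set z | (z <= A)%MS].

Definition L_OmegaS (R : fieldType) (n : nat) : set 'rV[R]_(n + n) :=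
  \bigcup_(A in @OmegaS R n) Lrow A.

Definition peval (R : comNzRingType) (k : nat) (p : mpoly.mpoly k R) (z : 'rV[R]_k) : R :=
  mpoly.meval (fun i : 'I_k => z ord0 i) p.

Definition P_OmegaS (R : fieldType) (n : nat) : set (mpoly.mpoly (n + n) R) :=
  [set p | forall z, @L_OmegaS R n z -> peval p z = 0].

Definition N_S (R : fieldType) (n : nat) : set 'rV[R]_(n + n) :=
  \bigcap_(p in @P_OmegaS R n) [set z | peval p z = 0].

From HB Require Import structures.
From mathcomp Require Import all_boot all_order all_algebra.
From mathcomp Require Import all_classical all_reals all_analysis.
From mathcomp Require Import ring.
From mathcomp Require mpoly.
Set Implicit Arguments. Unset Strict Implicit. Unset Printing Implicit Defensive.
Import Order.TTheory GRing.Theory Num.Theory.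
Import numFieldNormedType.Exports.
Local Open Scope ring_scope.
Local Open Scope classical_set_scope.

(* A vector z = (u, v) is in the row space of [w 0; 0 -w] iff (u, v) = (a w, b w)
   for some scalars a, b, so L(Omega_S) is the set of z whose two halves are
   proportional, i.e. the common zero set of the 2x2 minors u_i v_j - u_j v_i.
   These minors are continuous, so L(Omega_S) is closed; they are polynomials, so
   L(Omega_S) is an algebraic set and hence equals the zero set of its own
   vanishing ideal, which is N_S. *)

(* [mpoly] cannot be imported next to mathcomp-analysis (clashing notations), so
   the ring structure of its polynomials is activated by hand. *)
Local Canonical mpoly.mpoly_mpoly__canonical__Algebra_AddMagma.
Local Canonical mpoly.mpoly_mpoly__canonical__Algebra_AddSemigroup.
Local Canonical mpoly.mpoly_mpoly__canonical__Algebra_AddUMagma.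
Local Canonical mpoly.mpoly_mpoly__canonical__Algebra_BaseAddMagma.
Local Canonical mpoly.mpoly_mpoly__canonical__Algebra_BaseAddUMagma.
Local Canonical mpoly.mpoly_mpoly__canonical__Algebra_BaseZmodule.
Local Canonical mpoly.mpoly_mpoly__canonical__Algebra_ChoiceBaseAddMagma.
Local Canonical mpoly.mpoly_mpoly__canonical__Algebra_ChoiceBaseAddUMagma.
Local Canonical mpoly.mpoly_mpoly__canonical__Algebra_Nmodule.
Local Canonical mpoly.mpoly_mpoly__canonical__Algebra_Zmodule.
Local Canonical mpoly.mpoly_mpoly__canonical__GRing_NzRing.
Local Canonical mpoly.mpoly_mpoly__canonical__GRing_NzSemiRing.
Local Canonical mpoly.mpoly_mpoly__canonical__GRing_PzRing.
Local Canonical mpoly.mpoly_mpoly__canonical__GRing_PzSemiRing.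

Section ZeroLocus.
Variables (R : comNzRingType) (k : nat).

Definition zero_locus (P : set (mpoly.mpoly k R)) : set 'rV[R]_k :=
  \bigcap_(p in P) [set z | peval p z = 0].

Definition vanishing_ideal (S : set 'rV[R]_k) : set (mpoly.mpoly k R) :=
  [set p | forall z, S z -> peval p z = 0].

Lemma zero_locus_vanishing_idealK (P : set (mpoly.mpoly k R)) :
  zero_locus (vanishing_ideal (zero_locus P)) = zero_locus P.
Proof.
apply/seteqP; split=> z zPz p Pp; first by apply: zPz => y; apply.
exact: Pp.
Qed.

End ZeroLocus.

Section HalvesMinor.
Variables (R : comNzRingType) (n : nat).

Definition halves_minor (z : 'rV[R]_(n + n)) (i j : 'I_n) : R :=
  z 0 (lshift n i) * z 0 (rshift n j) - z 0 (lshift n j) * z 0 (rshift n i).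

Definition halves_minor_mpoly (i j : 'I_n) : mpoly.mpoly (n + n) R :=
  let X l := mpoly.mpolyX R (mpoly.mnm1 l) in
  X (lshift n i) * X (rshift n j) - X (lshift n j) * X (rshift n i).

Lemma peval_halves_minor_mpoly z i j :
  peval (halves_minor_mpoly i j) z = halves_minor z i j.
Proof. by rewrite /peval mpoly.mevalB !mpoly.mevalM !mpoly.mevalXU. Qed.

End HalvesMinor.

Section RowSpace.
Variables (F : fieldType) (n : nat).

Lemma L_OmegaS_scaleP (z : 'rV[F]_(n + n)) :
  L_OmegaS z <-> exists a b (w : 'rV[F]_n), z = row_mx (a *: w) (b *: w).
Proof.
split.
  case=> A [w ->] /submxP [D ->].
  exists (lsubmx D 0 0), (- rsubmx D 0 0), w.
  rewrite /OmegaS_mx -{1}[D]hsubmxK mul_row_block !mulmx0 addr0 add0r mulmxN.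
  by rewrite {1}[lsubmx D]mx11_scalar {1}[rsubmx D]mx11_scalar !mul_scalar_mx scaleNr.
case=> a [b [w ->]]; exists (OmegaS_mx w); first by exists w.
apply/submxP; exists (row_mx a%:M (- b)%:M).
rewrite mul_row_block !mulmx0 addr0 add0r mulmxN !mul_scalar_mx.
by rewrite scaleNr opprK.
Qed.

Lemma halves_minor_row_mx_scale a b (w : 'rV[F]_n) i j :
  halves_minor (row_mx (a *: w) (b *: w)) i j = 0.
Proof. rewrite /halves_minor !row_mxEl !row_mxEr !mxE; ring. Qed.

Lemma row_mx_scale_of_halves_minor (z : 'rV[F]_(n + n)) :
  (forall i j, halves_minor z i j = 0) ->
  exists a b (w : 'rV[F]_n), z = row_mx (a *: w) (b *: w).
Proof.
move=> minor0; have [u0|/rV0Pn[i ui]] := eqVneq (lsubmx z) 0.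
  by exists 0, 1, (rsubmx z); rewrite scale0r scale1r -u0 hsubmxK.
rewrite mxE in ui.
exists 1, (z 0 (rshift n i) / z 0 (lshift n i)), (lsubmx z).
rewrite scale1r -{1}[z]hsubmxK; congr row_mx; apply/rowP=> j.
have /eqP := minor0 i j; rewrite subr_eq0 => /eqP minor_ij.
by rewrite !mxE mulrAC [X in X / _]mulrC -minor_ij mulrAC mulfV // mul1r.
Qed.

Lemma L_OmegaS_minorsP (z : 'rV[F]_(n + n)) :
  L_OmegaS z <-> forall i j, halves_minor z i j = 0.
Proof.
split; last by move/row_mx_scale_of_halves_minor/L_OmegaS_scaleP.
by move/L_OmegaS_scaleP=> [a [b [w ->]]] i j; exact: halves_minor_row_mx_scale.
Qed.

Lemma L_OmegaS_zero_locus :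
  @L_OmegaS F n = zero_locus [set p | exists i j, p = halves_minor_mpoly F i j].
Proof.
apply/seteqP; split=> z.
  by move/L_OmegaS_minorsP=> minor0 _ [i [j ->]] /=; rewrite peval_halves_minor_mpoly.
move=> zPz; apply/L_OmegaS_minorsP=> i j.
by rewrite -peval_halves_minor_mpoly; apply: zPz; exists i, j.
Qed.

Lemma N_S_L_OmegaS : @N_S F n = @L_OmegaS F n.
Proof.
have -> : @N_S F n = zero_locus (vanishing_ideal (@L_OmegaS F n)) by [].
by rewrite L_OmegaS_zero_locus zero_locus_vanishing_idealK.
Qed.

End RowSpace.

Section Closedness.
Variables (R : realFieldType) (n : nat).

Lemma halves_minor_continuous (i j : 'I_n) :
  continuous (fun z : 'rV[R]_(n + n) => halves_minor z i j).
Proof.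
move=> z; have coord l := @coord_continuous R 1 (n + n) 0 l z.
exact: cvgB (cvgM (coord _) (coord _)) (cvgM (coord _) (coord _)).
Qed.

Lemma closed_L_OmegaS : closed (@L_OmegaS R n).
Proof.
have -> : @L_OmegaS R n =
    \bigcap_(ij in [set: 'I_n * 'I_n]) ((fun z => halves_minor z ij.1 ij.2) @^-1` [set 0]).
  apply/seteqP; split=> z; first by move/L_OmegaS_minorsP=> minor0 [i j] _; exact: minor0.
  by move=> minor0; apply/L_OmegaS_minorsP=> i j; exact: (minor0 (i, j)).
apply: closed_bigI => -[i j] _.
apply: (continuous_closedP _).1; [exact: halves_minor_continuous | exact: closed_eq].
Qed.

End Closedness.

Theorem theorem4p2 (R : realType) (n : nat) (hn : (1 < n)%N) :
  @L_OmegaS R n = closure (@L_OmegaS R n : set 'rV[R]_(n + n)) /\ closure (@L_OmegaS R n : set 'rV[R]_(n + n)) = @N_S R n.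
Proof.
have closedL := @closed_L_OmegaS R n.
rewrite -(closure_id _).1 //.
by split; last rewrite N_S_L_OmegaS.
Qed.
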